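(* Let $a,b,c,d,e,f,g>0$ with $b+c\ne f$, and let $X=(X^1,X^2)$ be a time-homogeneous Markov chain on $\{(0,0),(0,1),(1,0),(1,1)\}$ (states ordered as listed) with $X_0=(0,0)$ and generator $$\Lambda=\begin{pmatrix}-(a+b+c)&b&a&c\\0&-(d+e)&d&e\\0&0&-f&f\\0&0&g&-g\end{pmatrix}.$$ Then $X^2$ is not a Markov chain with respect to its own filtration $\mathbb F^{X^2}$ (and hence not with respect to $\mathbb F^X$ either).
   Context: $\mathbb F^{X^2}$ and $\mathbb F^X$ denote the natural filtrations of $X^2$ and $X$. *)

From HB Require Import structures.
From mathcomp Require Import all_boot all_order all_algebra.
From mathcomp Require Import all_classical all_reals all_analysis.
Set Implicit Arguments. Unset Strict Implicit. Unset Printing Implicit Defensive.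
Import Order.TTheory GRing.Theory Num.Theory.
Local Open Scope classical_set_scope.
Local Open Scope ring_scope.

(* State space {(0,0),(0,1),(1,0),(1,1)} encoded as 'I_4 in the listed order:
   0 = (0,0), 1 = (0,1), 2 = (1,0), 3 = (1,1). *)
Definition coord1 (i : 'I_4) : bool := (2 <= i)%N.
Definition coord2 (i : 'I_4) : bool := odd i.

Definition Lam (R : realType) (a b c d e f g : R) : 'M[R]_4 :=
  \matrix_(i < 4, j < 4)
    nth 0 (nth [::] [:: [:: -(a+b+c); b; a; c];
                        [:: 0; -(d+e); d; e];
                        [:: 0; 0; -f; f];
                        [:: 0; 0; g; -g]] i) j.

(* Pt is the transition function generated by L: Pt 0 = I and
   d/dt Pt t = Pt t * L (Kolmogorov forward equation); for a finite matrix
   this characterizes Pt t = exp(t L) uniquely. *)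
Definition is_transition_fn (R : realType) (L : 'M[R]_4) (Pt : R -> 'M[R]_4) :=
  Pt 0 = 1%:M /\
  forall (t : R) (i j : 'I_4),
    is_derive t 1 (fun s => Pt s i j) ((Pt t *m L) i j).

Definition markov_chain_from0 (R : realType) (d : measure_display)
    (Omega : measurableType d) (P : probability Omega R)
    (Pt : R -> 'M[R]_4) (X : R -> Omega -> 'I_4) :=
  (forall (t : R) (i : 'I_4), measurable [set w | X t w = i]) /\
  forall (n : nat) (t : nat -> R) (x : nat -> 'I_4),
    0 <= t 0%N ->
    (forall k, (k < n)%N -> t k <= t k.+1) ->
    P [set w | forall k, (k <= n)%N -> X (t k) w = x k] =
      (Pt (t 0%N) ord0 (x 0%N) *
       \prod_(k < n) Pt (t k.+1 - t k) (x k) (x k.+1))%:E.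

(* A process Y with discrete (boolean) values is Markov with respect to its own
   natural filtration: for all 0 <= s_0 <= ... <= s_n <= u and values,
   P(Y_u = y | Y_{s_0}=y_0,...,Y_{s_n}=y_n) = P(Y_u = y | Y_{s_n} = y_n)
   whenever the conditioning event has positive probability; written here in
   multiplied-out form (trivially true when the conditioning event is null). *)
Definition markov_own_filtration (R : realType) (d : measure_display)
    (Omega : measurableType d) (P : probability Omega R)
    (Y : R -> Omega -> bool) :=
  forall (n : nat) (s : nat -> R) (u : R) (y : nat -> bool) (z : bool),
    0 <= s 0%N ->
    (forall k, (k < n)%N -> s k <= s k.+1) ->
    s n <= u ->
    (P [set w | Y u w = z /\ forall k, (k <= n)%N -> Y (s k) w = y k] *
     P [set w | Y (s n) w = y n])%E =
    (P [set w | Y u w = z /\ Y (s n) w = y n] *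
     P [set w | forall k, (k <= n)%N -> Y (s k) w = y k])%E.

From HB Require Import structures.
From mathcomp Require Import all_boot all_order all_algebra.
From mathcomp Require Import all_classical all_reals all_analysis.
From mathcomp Require Import ring.
Set Implicit Arguments. Unset Strict Implicit. Unset Printing Implicit Defensive.
Import Order.TTheory GRing.Theory Num.Theory.
Local Open Scope classical_set_scope.
Local Open Scope ring_scope.

(* No state other than (0,0) leads to (0,0), so the event
   {X^2_s = 1, X^2_{s+k} = 0} forces X_{s+k} = (1,0), whereas {X^2_{s+k} = 0}
   alone also allows X_{s+k} = (0,0).  The Markov property of X^2 at the times
   s < s + k < s + k + h therefore forces the chances of reaching {X^2 = 1}
   within time h from (0,0) and from (1,0) to agree, for all h >= 0; their
   derivatives at h = 0 are b + c and f.  The only escape is that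
   {X^2_s = 1, X_{s+k} = (1,0)} is null for all s, k, and differentiating in
   k and then in s at 0 gives b d + c g = 0, which is absurd. *)

Notation s00 := (ord0 : 'I_4).
Notation s01 := (@Ordinal 4 1 isT).
Notation s10 := (@Ordinal 4 2 isT).
Notation s11 := (@Ordinal 4 3 isT).

Lemma big_ord4 (V : nmodType) (F : 'I_4 -> V) :
  \sum_(i < 4) F i = F s00 + F s01 + F s10 + F s11.
Proof.
rewrite !big_ord_recl big_ord0 addr0 !addrA.
by congr (_ + _ + _ + _); congr F; apply: val_inj.
Qed.

Lemma measure_preimage_fin (R : realFieldType) d (T : ringOfSetsType d)
    (mu : {content set T -> \bar R}) (I : finType) (Z : T -> I) (p : pred I) :
  (forall i, measurable (Z @^-1` [set i])) ->
  mu (Z @^-1` [set i | p i]) = (\sum_(i | p i) mu (Z @^-1` [set i]))%E.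
Proof.
move=> mZ.
have -> : Z @^-1` [set i | p i] = \bigcup_(i in [set i | p i]) Z @^-1` [set i].
  apply/seteqP; split => [w pw|w [i pi /= wi]]; first by exists (Z w).
  by rewrite /preimage /= wi.
rewrite measure_fin_bigcup //; first last.
- apply/trivIsetP => i j _ _ ij; apply/seteqP; split => // w [/= wi wj].
  by move: ij; rewrite -wi -wj eqxx.
- exact: finite_finset.
rewrite (fsbigE [seq i <- enum I | p i]); last 3 first.
- by rewrite filter_uniq ?enum_uniq.
- by move=> i; rewrite /= mem_filter => /andP [].
- by move=> i pi; rewrite mem_filter pi mem_enum.
rewrite big_filter_cond big_enum_cond; apply: eq_bigl => i.
by case: (boolP (p i)) => pi //=; exact: mem_set.
Qed.

Lemma is_derive_mul_expR_cst (R : realType) (k : R) (p : R -> R) :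
  (forall t : R, is_derive t (1 : R) p (p t * - k)) ->
  forall t, p t * expR (k * t) = p 0.
Proof.
move=> dp t.
have -> : p 0 = p 0 * expR (k * 0) by rewrite mulr0 expR0 mulr1.
apply: (@is_derive_0_is_cst _ (fun s => p s * expR (k * s))) => x.
by apply: trigger_derive; rewrite /GRing.scale /=; ring.
Qed.

Lemma is_derive_vanish_right (R : realType) (F : R -> R) (l : R) :
  (forall h, 0 <= h -> F h = 0) -> is_derive (0 : R) (1 : R) F l -> l = 0.
Proof.
move=> F0 [dF <-].
apply: (cvg_unique _ (cvg_dnbhs_at_right dF)); first exact: norm_hausdorff.
apply: cvg_near_cst; near=> h.
rewrite /= !F0 ?subrr ?scaler0 // addr0 /GRing.scale /= mulr1; apply/ltW.
by near: h; exact: nbhs_right_gt.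
Unshelve. all: by end_near.
Qed.

Lemma markov_own_filtration3 (R : realType) (disp : measure_display)
    (Omega : measurableType disp) (P : probability Omega R)
    (Y : R -> Omega -> bool) (s0 s1 u : R) (y0 y1 z : bool) :
  markov_own_filtration P Y -> 0 <= s0 -> s0 <= s1 -> s1 <= u ->
  (P [set w | [&& Y s0 w == y0, Y s1 w == y1 & Y u w == z]] *
   P [set w | Y s1 w == y1] =
   P [set w | (Y s1 w == y1) && (Y u w == z)] *
   P [set w | (Y s0 w == y0) && (Y s1 w == y1)])%E.
Proof.
move=> M h0 h01 h1u.
pose s := nth 0 [:: s0; s1]; pose y := nth false [:: y0; y1].
have past w : (forall k, (k <= 1)%N -> Y (s k) w = y k) <->
    (Y s0 w == y0) && (Y s1 w == y1).
  split=> [E|/andP [/eqP E0 /eqP E1] [|[|]] //].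
  by rewrite (E 0%N isT) (E 1%N isT) !eqxx.
have s_mono k : (k < 1)%N -> s k <= s k.+1 by case: k.
have := M 1%N s u y z h0 s_mono h1u.
have -> : [set w | Y u w = z /\ forall k, (k <= 1)%N -> Y (s k) w = y k] =
    [set w | [&& Y s0 w == y0, Y s1 w == y1 & Y u w == z]].
  apply/seteqP; split => w /=; first by case=> -> /past/andP [-> ->]; rewrite eqxx.
  by move=> /and3P [w0 w1 /eqP wu]; split; last by apply/past; rewrite w0 w1.
have -> : [set w | forall k, (k <= 1)%N -> Y (s k) w = y k] =
    [set w | (Y s0 w == y0) && (Y s1 w == y1)].
  by apply/seteqP; split => w /past.
have -> : [set w | Y (s 1%N) w = y 1%N] = [set w | Y s1 w == y1].
  by apply/seteqP; split => w /eqP.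
have -> // : [set w | Y u w = z /\ Y (s 1%N) w = y 1%N] =
    [set w | (Y s1 w == y1) && (Y u w == z)].
apply/seteqP; split => w /=; first by case=> -> ->; rewrite !eqxx.
by case/andP => /eqP -> /eqP ->.
Qed.

Section TransitionFunction.
Variables (R : realType) (a b c d e f g : R) (Pt : R -> 'M[R]_4).
Hypothesis hPt : is_transition_fn (Lam a b c d e f g) Pt.

Lemma transition0 i j : Pt 0 i j = (i == j)%:R.
Proof. by rewrite hPt.1 mxE. Qed.

Lemma is_derive_transition0 i j :
  is_derive (0 : R) (1 : R) (fun s => Pt s i j) (Lam a b c d e f g i j).
Proof. by have := hPt.2 0 i j; rewrite hPt.1 mul1mx. Qed.

Lemma transition_col0 t i : Pt t i s00 * expR ((a + b + c) * t) = (i == s00)%:R.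
Proof.
rewrite -(transition0 i s00).
apply: (@is_derive_mul_expR_cst _ _ (fun s => Pt s i s00)) => s.
have -> : Pt s i s00 * - (a + b + c) = (Pt s *m Lam a b c d e f g) i s00.
  by rewrite mxE big_ord4 !mxE /=; ring.
exact: hPt.2.
Qed.

Lemma transition_col0_eq0 t i : i != s00 -> Pt t i s00 = 0.
Proof.
move=> /negbTE i0; have /eqP := transition_col0 t i.
by rewrite i0 mulf_eq0 (gt_eqF (expR_gt0 _)) orbF => /eqP.
Qed.

Lemma transition00_gt0 t : 0 < Pt t s00 s00.
Proof.
have : 0 < Pt t s00 s00 * expR ((a + b + c) * t) by rewrite transition_col0.
by rewrite pmulr_lgt0 ?expR_gt0.
Qed.

(* The probability of {X^2_s = 1, X_{s+k} = (1,0)}. *)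
Definition flip_mass s k :=
  Pt s s00 s01 * Pt k s01 s10 + Pt s s00 s11 * Pt k s11 s10.

(* Cross-multiplied difference of the probabilities of {X^2_h = 1} started at
   (0,0) and at (1,0); the row sums (which equal 1) are kept as they are. *)
Definition escape_defect h :=
  (Pt h s00 s01 + Pt h s00 s11) * \sum_j Pt h s10 j -
  (Pt h s10 s01 + Pt h s10 s11) * \sum_j Pt h s00 j.

Lemma is_derive_escape_defect0 :
  is_derive (0 : R) (1 : R) escape_defect (b + c - f).
Proof.
rewrite /escape_defect; under eq_fun do rewrite !big_ord4.
have D := is_derive_transition0.
by apply: trigger_derive; rewrite /GRing.scale /= !transition0 !mxE /=; ring.
Qed.

Lemma flip_mass_neq0 : 0 < b -> 0 < c -> 0 < d -> 0 < g ->
  exists s k, [/\ 0 <= s, 0 <= k & flip_mass s k != 0].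
Proof.
move=> hb hc hd hg; apply: contrapT => flip0.
have flip_eq0 s : 0 <= s -> forall k, 0 <= k -> flip_mass s k = 0.
  move=> hs k hk; have [//|nz] := eqVneq (flip_mass s k) 0.
  by case: flip0; exists s, k.
have rate_eq0 s : 0 <= s -> Pt s s00 s01 * d + Pt s s00 s11 * g = 0.
  move=> hs; apply: (is_derive_vanish_right (flip_eq0 s hs)).
  have D := is_derive_transition0.
  by apply: trigger_derive; rewrite !mxE /= /GRing.scale.
have : b * d + c * g = 0.
  apply: (is_derive_vanish_right rate_eq0).
  have D := is_derive_transition0.
  by apply: trigger_derive; rewrite !mxE /= /GRing.scale /=; ring.
by apply/eqP; rewrite gt_eqF // addr_gt0 // mulr_gt0.
Qed.

End TransitionFunction.

Section MarkovChain.
Variables (R : realType) (disp : measure_display) (Omega : measurableType disp).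
Variables (P : probability Omega R) (Pt : R -> 'M[R]_4) (X : R -> Omega -> 'I_4).
Hypothesis hX : markov_chain_from0 P Pt X.

Lemma markov_chain_fdd3 t0 t1 t2 i j l :
  0 <= t0 -> t0 <= t1 -> t1 <= t2 ->
  P [set w | X t0 w = i /\ X t1 w = j /\ X t2 w = l] =
  (Pt t0 s00 i * Pt (t1 - t0) i j * Pt (t2 - t1) j l)%:E.
Proof.
move=> h0 h1 h2.
have := hX.2 2 (nth 0 [:: t0; t1; t2]) (nth s00 [:: i; j; l]) h0.
rewrite !big_ord_recr big_ord0 /= mul1r mulrA => <-; last by case=> [|[|]].
congr (P _); apply/seteqP; split => w /=; first by move=> [? [? ?]] [|[|[|]]].
by move=> E; split; [|split]; [exact: (E 0%N)|exact: (E 1%N)|exact: (E 2%N)].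
Qed.

Lemma markov_chain_prob3 t0 t1 t2 (p : 'I_4 -> 'I_4 -> 'I_4 -> bool) :
  0 <= t0 -> t0 <= t1 -> t1 <= t2 ->
  P [set w | p (X t0 w) (X t1 w) (X t2 w)] =
  (\sum_i \sum_j \sum_l
     (if p i j l then Pt t0 s00 i * Pt (t1 - t0) i j * Pt (t2 - t1) j l
      else 0))%:E.
Proof.
move=> h0 h1 h2.
pose Z w := (X t0 w, (X t1 w, X t2 w)).
have Z_fiber i j l :
    Z @^-1` [set (i, (j, l))] = [set w | X t0 w = i /\ X t1 w = j /\ X t2 w = l].
  by apply/seteqP; split => w; rewrite /Z /preimage /=;
    [case=> -> -> -> | case=> -> [-> ->]].
have mZ x : measurable (Z @^-1` [set x]).
  case: x => i [j l]; rewrite Z_fiber.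
  by apply: measurableI; [|apply: measurableI]; exact: hX.1.
rewrite (_ : [set w | _] = Z @^-1` [set x | p x.1 x.2.1 x.2.2]) //.
rewrite measure_preimage_fin // big_mkcond.
rewrite (eq_bigr (fun x => (if p x.1 x.2.1 x.2.2
    then Pt t0 s00 x.1 * Pt (t1 - t0) x.1 x.2.1 * Pt (t2 - t1) x.2.1 x.2.2
    else 0)%:E)); last first.
  by move=> [i [j l]] _ /=; case: (p i j l); rewrite ?Z_fiber ?markov_chain_fdd3.
rewrite sumEFin; congr (_%:E).
under [RHS]eq_bigr do rewrite pair_big.
by rewrite pair_big; apply: eq_big => // -[i [j l]].
Qed.

End MarkovChain.

Section SecondCoordinate.
Variables (R : realType) (a b c d e f g : R) (disp : measure_display).
Variables (Omega : measurableType disp) (P : probability Omega R).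
Variables (Pt : R -> 'M[R]_4) (X : R -> Omega -> 'I_4).
Hypotheses (hPt : is_transition_fn (Lam a b c d e f g) Pt)
  (hX : markov_chain_from0 P Pt X).

Lemma markov_coord2_defect s k h :
  markov_own_filtration P (fun t w => coord2 (X t w)) ->
  0 <= s -> 0 <= k -> 0 <= h ->
  flip_mass Pt s k * (Pt s s00 s00 * Pt k s00 s00) * escape_defect Pt h = 0.
Proof.
move=> M hs hk hh.
have hsk : s <= s + k by rewrite lerDl.
have hku : s + k <= s + k + h by rewrite lerDl.
have := markov_own_filtration3 true false true M hs hsk hku.
have prob3 p := markov_chain_prob3 hX p hs hsk hku.
rewrite (prob3 (fun i j l =>
  [&& coord2 i == true, coord2 j == false & coord2 l == true])).
rewrite (prob3 (fun _ j _ => coord2 j == false)).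
rewrite (prob3 (fun _ j l => (coord2 j == false) && (coord2 l == true))).
rewrite (prob3 (fun i j _ => (coord2 i == true) && (coord2 j == false))).
rewrite -!EFinM => -[/esym/eqP]; rewrite -subr_eq0 => /eqP markov_eq.
rewrite -[RHS]markov_eq.
have -> : s + k - s = k by rewrite addrC addKr.
have -> : s + k + h - (s + k) = h by rewrite addrC addKr.
rewrite /flip_mass /escape_defect !big_ord4 /=.
have col0 i : i != s00 -> Pt k i s00 = 0 by apply: (transition_col0_eq0 hPt).
rewrite (col0 s01) // (col0 s10) // (col0 s11) //.
ring.
Qed.

End SecondCoordinate.

Theorem mainTheorem10 (R : realType) (a b c d e f g : R)
    (ha : 0 < a) (hb : 0 < b) (hc : 0 < c) (hd : 0 < d) (he : 0 < e)
    (hf : 0 < f) (hg : 0 < g) (hbcf : b + c != f)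
    (disp : measure_display) (Omega : measurableType disp)
    (P : probability Omega R)
    (Pt : R -> 'M[R]_4) (X : R -> Omega -> 'I_4)
    (hPt : is_transition_fn (Lam a b c d e f g) Pt)
    (hX : markov_chain_from0 P Pt X) :
  ~ markov_own_filtration P (fun t w => coord2 (X t w)).
Proof.
move=> M.
have [s [k [hs hk flip_nz]]] := flip_mass_neq0 hPt hb hc hd hg.
have defect0 h : 0 <= h -> escape_defect Pt h = 0.
  move=> hh; have /eqP := markov_coord2_defect hPt hX M hs hk hh.
  rewrite !mulf_eq0 (negbTE flip_nz) (gt_eqF (transition00_gt0 hPt s)).
  by rewrite (gt_eqF (transition00_gt0 hPt k)) => /eqP.
have := is_derive_vanish_right defect0 (is_derive_escape_defect0 hPt).
by move/eqP; rewrite subr_eq0 (negbTE hbcf).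
Qed.
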